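(* Let $\phi:\mathbb{N}_0\to\mathbb{N}_0$ satisfy $\phi(0)=0$ and $\phi(x)\neq x$ for all $x\in\mathbb{N}$, let $k,n\ge1$, and assume the local function $\phi_n$ has no cycle. Let $p_\nu=|\{x\in D_n:h(x)=\nu\}|$ for $1\le\nu\le n$, $m=\max\{\nu\in\{1,\dots,n\}:p_\nu\ge1\}$ and $\pi=(p_1,\dots,p_m)$. Then $\pi$ is an ordered partition (composition) of $n$ of length $m$ with $1\le m\le n$ and $p_1,\dots,p_m\ge1$. Moreover, with $J_{n,k}(\phi)=\{x\in D_n:\phi_n^k(x)\in D_n\}$, \[ |J_{n,k}(\phi)|=n-\sum_{\nu=1}^k p_\nu\quad(1\le k\le m), \] and $|J_{n,k}(\phi)|=0$ for $k\ge m$.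
   Context: $\mathbb{N}=\{1,2,\dots\}$, $\mathbb{N}_0=\mathbb{N}\cup\{0\}$, $D_n=\{1,\dots,n\}$, $D_{n,0}=D_n\cup\{0\}$. The local function $\phi_n:D_{n,0}\to D_{n,0}$ is $\phi_n(x)=\phi(x)$ if $x\in D_n$ and $\phi(x)\in D_n$, and $\phi_n(x)=0$ otherwise. ''$\phi_n$ has no cycle'' means there are no $m\ge2$ and $x\in D_n$ with $\phi_n^m(x)=x$. The height of $x\in D_n$ is $h(x)=\min\{k\in\mathbb{N}:\phi_n^k(x)=0\}$. *)

From mathcomp Require Import all_boot.
Set Implicit Arguments. Unset Strict Implicit. Unset Printing Implicit Defensive.

Definition inD (n x : nat) : bool := (0 < x) && (x <= n).

Definition phin (phi : nat -> nat) (n x : nat) : nat :=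
  if inD n x && inD n (phi x) then phi x else 0.

Definition no_cycle (phi : nat -> nat) (n : nat) : Prop :=
  forall m x, 2 <= m -> inD n x -> iter m (phin phi n) x != x.

(* h(x) = nu, i.e. nu = min {k >= 1 : phi_n^k(x) = 0} *)
Definition has_height (phi : nat -> nat) (n x nu : nat) : bool :=
  [&& 0 < nu, iter nu (phin phi n) x == 0 &
      [forall k : 'I_nu, (0 < val k) ==> (iter k (phin phi n) x != 0)]].

Definition pcount (phi : nat -> nat) (n nu : nat) : nat :=
  count (fun x => has_height phi n x nu) (iota 1 n).

Definition mmax (phi : nat -> nat) (n : nat) : nat :=
  \max_(1 <= nu < n.+1 | 0 < pcount phi n nu) nu.

Definition Jcard (phi : nat -> nat) (n k : nat) : nat :=
  count (fun x => inD n (iter k (phin phi n) x)) (iota 1 n).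

From mathcomp Require Import all_boot.

(* Since phi_n has no cycle, a trajectory x, phi_n x, ... inside D_n never
   repeats a point, so by pigeonhole it reaches 0 within n steps: every
   x in D_n has a height h(x) <= n, and phi_n^k(x) lies in D_n exactly when
   k < h(x). Hence J_{n,k} consists of the points of height > k, which gives
   the counting formula, and along the trajectory of a point of maximal height
   m the heights m, m-1, ..., 1 all occur, so no p_nu with nu <= m vanishes. *)

Lemma sum_count_eq (T : Type) (g : T -> nat) (s : seq T) (k : nat) :
  \sum_(1 <= nu < k.+1) count (fun x => g x == nu) s
  = count (fun x => 0 < g x <= k) s.
Proof.
elim: k => [|k IHk].
  by rewrite big_geq // (@eq_count _ _ pred0) ?count_pred0 // => x /=; case: (g x).
rewrite big_nat_recr //= IHk -count_predUI.
rewrite (@eq_count _ (predI _ _) pred0) ?count_pred0 ?addn0; last first.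
  by move=> x /=; case: eqP => [->|]; rewrite ?andbF // ltnn andbF.
apply: eq_count => x /=.
by rewrite [g x <= k.+1]leq_eqVlt ltnS; case: eqP => [->|]; rewrite ?orbT ?orbF.
Qed.

Lemma mem_iota_inD n x : (x \in iota 1 n) = inD n x.
Proof. by rewrite mem_iota /inD add1n ltnS. Qed.

Section LocalMap.
Variables (phi : nat -> nat) (n : nat).
Local Notation f := (phin phi n).

Lemma inD_neq0 x : inD n x -> x != 0.
Proof. by case/andP; case: x. Qed.

Lemma inD_n_gt0 {x} : inD n x -> 0 < n.
Proof. by case/andP=> x_gt0 /(leq_trans x_gt0). Qed.

Lemma iter_phin0 k : iter k f 0 = 0.
Proof. by elim: k => //= k ->. Qed.

Lemma iter_phin_eq0_ge {x i k} : iter i f x = 0 -> i <= k -> iter k f x = 0.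
Proof. by move=> fix0 /subnK <-; rewrite iterD fix0 iter_phin0. Qed.

Lemma inD_phin y : inD n (f y) = (f y != 0).
Proof. by rewrite /phin; case: ifP => // /andP[_ Dphi]; rewrite Dphi inD_neq0. Qed.

Lemma inD_iter_phin x k : inD n x -> inD n (iter k f x) = (iter k f x != 0).
Proof. by case: k => [|k] /= Dx; rewrite ?inD_phin // Dx inD_neq0. Qed.

Hypothesis phi_neq : forall x, 0 < x -> phi x != x.
Hypothesis phin_acyclic : no_cycle phi n.

Lemma iter_phin_neq y d : inD n y -> 0 < d -> iter d f y != y.
Proof.
move=> Dy; case: d => [|[|d]] // _; last exact: phin_acyclic.
rewrite /= /phin; case: ifP => _; first by apply: phi_neq; case/andP: Dy.
by rewrite eq_sym inD_neq0.
Qed.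

Lemma not_looping_phin x k : inD n (iter k f x) -> ~~ looping f x k.
Proof.
move=> Dk; apply/trajectP => -[i lt_ik eq_ki].
have Di : inD n (iter i f x) by rewrite -eq_ki.
have := @iter_phin_neq _ (k - i) Di; rewrite subn_gt0 lt_ik.
by rewrite -iterD subnK ?(ltnW lt_ik) // -eq_ki eqxx => /(_ isT).
Qed.

Lemma iter_phin_n x : inD n x -> iter n f x = 0.
Proof.
move=> Dx; apply/eqP/negPn/negP => nz_n.
have Dn : inD n (iter n f x) by rewrite inD_iter_phin.
have traj_D : {subset traject f x n.+1 <= iota 1 n}.
  move=> _ /trajectP[i lt_in ->]; rewrite mem_iota_inD inD_iter_phin //.
  by apply: contra nz_n => /eqP /iter_phin_eq0_ge ->.
have /uniq_leq_size/(_ traj_D) : uniq (traject f x n.+1).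
  by rewrite looping_uniq not_looping_phin.
by rewrite size_traject size_iota ltnn.
Qed.

Lemma exists_iter_phin_eq0 x : exists k, (0 < k) && (iter k f x == 0).
Proof.
case Dx: (inD n x); last by exists 1; rewrite /= /phin Dx.
by exists n; rewrite iter_phin_n // (inD_n_gt0 Dx).
Qed.

Definition height x := ex_minn (exists_iter_phin_eq0 x).

Lemma height_gt0 x : 0 < height x.
Proof. by rewrite /height; case: ex_minnP => k /andP[]. Qed.

Lemma iter_height x : iter (height x) f x = 0.
Proof. by rewrite /height; case: ex_minnP => k /andP[_ /eqP]. Qed.

Lemma height_min {x k} : 0 < k -> iter k f x = 0 -> height x <= k.
Proof.
move=> k_gt0 fix0; rewrite /height; case: ex_minnP => j _ /(_ k); apply.
by rewrite k_gt0 fix0.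
Qed.

Lemma inD_iter_height x k : inD n x -> inD n (iter k f x) = (k < height x).
Proof.
move=> Dx; rewrite inD_iter_phin //; case: ltnP => [lt_kh | le_hk].
  case: k lt_kh => [|k] lt_kh; first exact: inD_neq0.
  by apply/eqP => /(height_min (ltn0Sn k)); rewrite leqNgt lt_kh.
by rewrite (iter_phin_eq0_ge (iter_height x) le_hk).
Qed.

Lemma height_eq x nu :
  inD n x -> (forall j, inD n (iter j f x) = (j < nu)) -> height x = nu.
Proof.
move=> Dx Dj; apply/eqP; rewrite eqn_leq leqNgt -(inD_iter_height x nu Dx) Dj ltnn.
by rewrite leqNgt -(Dj (height x)) inD_iter_height // ltnn.
Qed.

Lemma height_iter x k :
  inD n x -> k < height x -> height (iter k f x) = height x - k.
Proof.
move=> Dx lt_kh; apply: height_eq => [|j]; first by rewrite inD_iter_height.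
by rewrite -iterD inD_iter_height // ltn_subRL addnC.
Qed.

Lemma height_le_n x : inD n x -> height x <= n.
Proof.
by move=> Dx; apply: height_min; [exact: inD_n_gt0 Dx | exact: iter_phin_n].
Qed.

Lemma has_heightE x nu : has_height phi n x nu = (height x == nu).
Proof.
apply/and3P/eqP => [[nu_gt0 /eqP fix0 /forallP below] | <-].
  apply/eqP; rewrite eqn_leq height_min //= leqNgt; apply/negP => lt_hnu.
  by move: (below (Ordinal lt_hnu)); rewrite height_gt0 iter_height.
split; [exact: height_gt0 | exact/eqP/iter_height |].
apply/forallP => -[k lt_kh] /=; apply/implyP => k_gt0; apply/eqP.
by move/(height_min k_gt0); rewrite leqNgt lt_kh.
Qed.

Lemma pcount_height nu :
  pcount phi n nu = count (fun x => height x == nu) (iota 1 n).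
Proof. by apply: eq_count => x; rewrite has_heightE. Qed.

Lemma Jcard_height k : Jcard phi n k = count (fun x => k < height x) (iota 1 n).
Proof. by apply: eq_in_count => x; rewrite mem_iota_inD; apply: inD_iter_height. Qed.

Lemma sum_pcount k :
  \sum_(1 <= nu < k.+1) pcount phi n nu = count (fun x => height x <= k) (iota 1 n).
Proof.
under eq_bigr do rewrite pcount_height.
by rewrite sum_count_eq; apply: eq_count => x; rewrite height_gt0.
Qed.

Lemma height_le_mmax x : inD n x -> height x <= mmax phi n.
Proof.
move=> Dx; apply: (leq_bigmax_seq (F := id)).
  by rewrite mem_index_iota height_gt0 ltnS height_le_n.
by rewrite pcount_height -has_count; apply/hasP; exists x; rewrite ?mem_iota_inD.
Qed.

Lemma mmax_height : 0 < n -> exists2 x, inD n x & height x = mmax phi n.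
Proof.
move=> n_gt0.
have D1 : inD n 1 by rewrite /inD n_gt0.
have : (mmax phi n == 0) || (0 < pcount phi n (mmax phi n)).
  rewrite /mmax; apply: (big_ind (fun v => (v == 0) || (0 < pcount phi n v))).
  - by [].
  - by move=> u v; case/orP: (leq_total u v) => [/maxn_idPr | /maxn_idPl] ->.
  - by move=> nu ->; rewrite orbT.
have -> /= : (mmax phi n == 0) = false.
  by apply/negbTE; rewrite -lt0n (leq_trans (height_gt0 1) (height_le_mmax 1 D1)).
rewrite pcount_height -has_count => /hasP[x].
by rewrite mem_iota_inD => Dx /eqP; exists x.
Qed.

Lemma pcount_gt0 nu : 0 < n -> 1 <= nu <= mmax phi n -> 0 < pcount phi n nu.
Proof.
move=> /mmax_height[x Dx hx] /andP[nu_gt0 le_num].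
have lt_sub : mmax phi n - nu < height x by rewrite hx ltn_subrL nu_gt0 -hx height_gt0.
rewrite pcount_height -has_count; apply/hasP; exists (iter (mmax phi n - nu) f x).
  by rewrite mem_iota_inD inD_iter_height.
by rewrite height_iter // hx subKn.
Qed.

Lemma mmax_bounds : 0 < n -> 0 < mmax phi n <= n.
Proof. by case/mmax_height=> x Dx <-; rewrite height_gt0 height_le_n. Qed.

Lemma sum_pcount_mmax : \sum_(1 <= nu < (mmax phi n).+1) pcount phi n nu = n.
Proof.
rewrite sum_pcount -[RHS](size_iota 1 n) -count_predT.
by apply: eq_in_count => x; rewrite mem_iota_inD => /height_le_mmax.
Qed.

Lemma Jcard_pcount k : Jcard phi n k = n - \sum_(1 <= nu < k.+1) pcount phi n nu.
Proof.
rewrite Jcard_height sum_pcount -[n in n - _](size_iota 1 n).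
rewrite -(count_predC (fun x => height x <= k)) addKn.
by apply: eq_count => x /=; rewrite ltnNge.
Qed.

Lemma Jcard_mmax_le k : mmax phi n <= k -> Jcard phi n k = 0.
Proof.
move=> le_mk; rewrite Jcard_height; apply/eqP; rewrite -leqn0 leqNgt -has_count.
apply/hasP => -[x]; rewrite mem_iota_inD ltnNge => /height_le_mmax.
by move/leq_trans => ->.
Qed.

End LocalMap.

Theorem proposition2p5 (phi : nat -> nat) (n : nat) :
  phi 0 = 0 ->
  (forall x, 0 < x -> phi x != x) ->
  1 <= n ->
  no_cycle phi n ->
  let m := mmax phi n in
  [/\ 1 <= m <= n,
      (forall nu, 1 <= nu <= m -> 1 <= pcount phi n nu),
      \sum_(1 <= nu < m.+1) pcount phi n nu = n,
      (forall k, 1 <= k <= m ->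
         Jcard phi n k = n - \sum_(1 <= nu < k.+1) pcount phi n nu) &
      (forall k, m <= k -> Jcard phi n k = 0)].
Proof.
move=> _ phi_neq n_gt0 acyclic m.
split.
- exact: mmax_bounds.
- by move=> nu; apply: pcount_gt0.
- exact: sum_pcount_mmax.
- by move=> k _; apply: Jcard_pcount.
- exact: Jcard_mmax_le.
Qed.
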